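(* Let $n\ge1$ and let $U\in\mathcal{C}_2^{(n)}$ be a Clifford unitary with Pauli periodicity $m\ge 1$. Then $(CU)^{-1}=C(U^{-1})$, where $U^{-1}\in\mathcal{C}_2^{(n)}$ again has Pauli periodicity $m$, and consequently $(CU)^{-1}\in\mathcal{C}_{m+2}^{(n+1)}\setminus\mathcal{C}_{m+1}^{(n+1)}$, i.e. $(CU)^{-1}$ lies in the same (strict) level of the Clifford hierarchy as $CU$.
   Context: The $n$-qubit Pauli group is $\mathcal{P}_n=\{\omega P_1\otimes\cdots\otimes P_n:\ \omega\in\{\pm1,\pm \mathrm{i}\},\ P_j\in\{I,X,Y,Z\}\}$. The Clifford hierarchy: $\mathcal{C}_1^{(n)}:=\mathcal{P}_n$, $\mathcal{C}_{k+1}^{(n)}:=\{U\in U(2^n):\ UPU^\dagger\in\mathcal{C}_k^{(n)}\ \forall P\in\mathcal{P}_n\}$; $\mathcal{C}_2^{(n)}$ is the Clifford group. $CU:=\ket{0}\!\bra{0}\otimes I_{2^n}+\ket{1}\!\bra{1}\otimes U$ (first qubit is the control). The Pauli periodicity of $U$ is $\min\{t\ge 0:\ U^{2^t}\in\mathcal{P}_n\}$ (exact membership in $\mathcal{P}_n$). *)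

From mathcomp Require Import all_boot all_order all_algebra.
Set Implicit Arguments. Unset Strict Implicit. Unset Printing Implicit Defensive.
Import GRing.Theory Num.Theory.
Local Open Scope ring_scope.

(* Complex numbers: an arbitrary numClosedFieldType C (e.g. algC, or complex R). *)
Section Qubits.
Variable C : numClosedFieldType.

Lemma two_pow_succ (n : nat) : (2 ^ n + 2 ^ n = 2 ^ n.+1)%N.
Proof. by rewrite expnS mul2n addnn. Qed.

(* Kronecker product A (x) B of a one-qubit matrix A (first / outer factor)
   with an n-qubit matrix B. *)
Definition kron2 (n : nat) (A : 'M[C]_2) (B : 'M[C]_(2 ^ n)) : 'M[C]_(2 ^ n.+1) :=
  castmx (two_pow_succ n, two_pow_succ n)
    (block_mx (A 0 0 *: B) (A 0 1 *: B) (A 1 0 *: B) (A 1 1 *: B)).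

Definition pauliI : 'M[C]_2 := 1%:M.
Definition pauliX : 'M[C]_2 := \matrix_(i < 2, j < 2) (if i != j then 1 else 0).
Definition pauliY : 'M[C]_2 :=
  \matrix_(i < 2, j < 2) (if i == j then 0 else if i == 0 then - 'i else 'i).
Definition pauliZ : 'M[C]_2 :=
  \matrix_(i < 2, j < 2) (if i == j then (if i == 0 then 1 else -1) else 0).

Definition pauli1 (a : 'I_4) : 'M[C]_2 :=
  match val a with 0 => pauliI | 1 => pauliX | 2 => pauliY | _ => pauliZ end.

Lemma two_pow0 : (1 = 2 ^ 0)%N. Proof. by []. Qed.

Fixpoint pauli_string (n : nat) (f : nat -> 'I_4) : 'M[C]_(2 ^ n) :=
  match n with
  | 0 => castmx (two_pow0, two_pow0) 1%:M
  | n'.+1 => kron2 (pauli1 (f 0%N)) (pauli_string n' (fun k => f k.+1))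
  end.

Definition is_pauli (n : nat) (M : 'M[C]_(2 ^ n)) : Prop :=
  exists (w : C) (f : nat -> 'I_4),
    (w = 1 \/ w = -1 \/ w = 'i \/ w = - 'i) /\ M = w *: pauli_string n f.

Definition adjoint (m : nat) (M : 'M[C]_m) : 'M[C]_m := (map_mx Num.conj M)^T.

Definition unitary (m : nat) (M : 'M[C]_m) : Prop :=
  M *m adjoint M = 1%:M /\ adjoint M *m M = 1%:M.

(* hier k n = C_{k+1}^{(n)} *)
Fixpoint hier (k n : nat) (U : 'M[C]_(2 ^ n)) : Prop :=
  match k with
  | 0 => is_pauli U
  | k'.+1 => unitary U /\
      forall P : 'M[C]_(2 ^ n), is_pauli P -> hier k' (U *m P *m adjoint U)
  end.

(* Clifford hierarchy level C_k^{(n)}, for k >= 1 (level 0 is undefined: empty) *)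
Definition clifford_level (k n : nat) (U : 'M[C]_(2 ^ n)) : Prop :=
  match k with 0 => False | k'.+1 => hier k' U end.

Definition mxpow (m : nat) (U : 'M[C]_m) (k : nat) : 'M[C]_m := iter k (mulmx U) 1%:M.

Definition pauli_periodicity (n : nat) (U : 'M[C]_(2 ^ n)) (m : nat) : Prop :=
  is_pauli (mxpow U (2 ^ m)) /\ forall t, (t < m)%N -> ~ is_pauli (mxpow U (2 ^ t)).

Definition proj0 : 'M[C]_2 := \matrix_(i < 2, j < 2) (if (i == 0) && (j == 0) then 1 else 0).
Definition proj1 : 'M[C]_2 := \matrix_(i < 2, j < 2) (if (i == 1) && (j == 1) then 1 else 0).

Definition ctrl (n : nat) (U : 'M[C]_(2 ^ n)) : 'M[C]_(2 ^ n.+1) :=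
  kron2 proj0 1%:M + kron2 proj1 U.

End Qubits.

From mathcomp Require Import all_boot all_order all_algebra.
Set Implicit Arguments. Unset Strict Implicit. Unset Printing Implicit Defensive.
Import GRing.Theory Num.Theory.
Local Open Scope ring_scope.

(* Conjugating a Pauli by CV factors through the control qubit: a target Pauli
   1 ⊗ Q goes to (1 ⊗ Q) C(Q V Q V†), where Q V Q V† is a Pauli when V is a
   Clifford, and the control X goes to C(V²) (X ⊗ V†).  Hence for a Clifford V,
   CV lies in level k+2 as soon as C(V²) lies in level k+1; conversely
   C(V²) = (CV (X ⊗ 1) CV†) (X ⊗ V) inherits level k+1 from CV in level k+2.
   At the bottom, CV is a Clifford iff V is a Pauli: Paulis commute or
   anticommute, and CV (X ⊗ 1) CV† = [[0, V†], [V, 0]].  So CV is in level k+2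
   iff V^(2^k) is a Pauli.  Finally (CU)⁻¹ = C(U†), and U† is a Clifford with the
   same Pauli periodicity as U. *)

Section CastSquare.
Variables (R : pzRingType) (k l : nat) (e : k = l).
Implicit Types A B : 'M[R]_k.

Lemma castmxM A B : castmx (e, e) A *m castmx (e, e) B = castmx (e, e) (A *m B).
Proof. by case: l / e; rewrite !castmx_id. Qed.

Lemma castmxD A B : castmx (e, e) A + castmx (e, e) B = castmx (e, e) (A + B).
Proof. by case: l / e; rewrite !castmx_id. Qed.

Lemma castmxZ c A : c *: castmx (e, e) A = castmx (e, e) (c *: A).
Proof. by case: l / e; rewrite !castmx_id. Qed.

Lemma castmx1 : castmx (e, e) (1%:M : 'M[R]_k) = 1%:M.
Proof. by case: l / e; rewrite !castmx_id. Qed.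

Lemma castmx_inj : injective (castmx (e, e) : 'M[R]_k -> 'M[R]_l).
Proof. by case: l / e => A B; rewrite !castmx_id. Qed.

End CastSquare.

Section SquareMatrices.
Variables (C : numClosedFieldType) (k : nat).
Implicit Types A B U : 'M[C]_k.

Lemma mxpowS U j : mxpow U j.+1 = U *m mxpow U j.
Proof. by []. Qed.

Lemma mxpow1 U : mxpow U 1 = U.
Proof. exact: mulmx1. Qed.

Lemma mxpowD U i j : mxpow U (i + j) = mxpow U i *m mxpow U j.
Proof. by elim: i => [|i IH]; rewrite ?mul1mx // addSn !mxpowS IH mulmxA. Qed.

Lemma mxpowSr U j : mxpow U j.+1 = mxpow U j *m U.
Proof. by rewrite -addn1 mxpowD mxpow1. Qed.

Lemma mxpow_sqr U j : mxpow (U *m U) (2 ^ j) = mxpow U (2 ^ j.+1).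
Proof.
rewrite -two_pow_succ; elim: (2 ^ j)%N => [|i IH] //.
by rewrite addSn addnS !mxpowS IH mulmxA.
Qed.

Lemma adjointM A B : adjoint (A *m B) = adjoint B *m adjoint A.
Proof. by rewrite /adjoint map_mxM trmx_mul. Qed.

Lemma adjointZ c A : adjoint (c *: A) = c^* *: adjoint A.
Proof. by rewrite /adjoint map_mxZ linearZ. Qed.

Lemma adjoint1 : adjoint (1%:M : 'M[C]_k) = 1%:M.
Proof. by rewrite /adjoint map_mx1 trmx1. Qed.

Lemma adjoint0 : adjoint (0 : 'M[C]_k) = 0.
Proof. by rewrite /adjoint map_mx0 trmx0. Qed.

Lemma adjointK : involutive (@adjoint C k).
Proof. by move=> A; apply/matrixP => i j; rewrite !mxE conjCK. Qed.

Lemma castmx_adjoint l (e : k = l) A :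
  adjoint (castmx (e, e) A) = castmx (e, e) (adjoint A).
Proof. by case: l / e; rewrite !castmx_id. Qed.

Lemma mxpow_adjoint U j : adjoint (mxpow U j) = mxpow (adjoint U) j.
Proof. by elim: j => [|j IH]; rewrite ?adjoint1 // mxpowS adjointM IH mxpowSr. Qed.

Lemma unitaryM A B : unitary A -> unitary B -> unitary (A *m B).
Proof.
move=> [A1 A2] [B1 B2]; split; rewrite adjointM.
  by rewrite mulmxA -(mulmxA A) B1 mulmx1 A1.
by rewrite mulmxA -(mulmxA _ _ A) A2 mulmx1 B2.
Qed.

Lemma unitary_adjoint U : unitary U -> unitary (adjoint U).
Proof. by case=> U1 U2; split; rewrite adjointK. Qed.

Lemma unitary_neq0 U : unitary U -> (0 < k)%N -> U != 0.
Proof.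
case=> U1 _ k_gt0; apply/eqP=> U0; move: U1; rewrite U0 mul0mx => /(congr1 mxrank).
by rewrite mxrank0 mxrank1 => k0; rewrite -k0 in k_gt0.
Qed.

Lemma invmx_unitary U : unitary U -> invmx U = adjoint U.
Proof.
case=> U1 _; have [Uunit _] := mulmx1_unit U1.
by rewrite -[invmx U]mulmx1 -U1 mulmxA mulVmx // mul1mx.
Qed.

Lemma conj_mulmx U A B : unitary U ->
  U *m (A *m B) *m adjoint U = (U *m A *m adjoint U) *m (U *m B *m adjoint U).
Proof. by case=> _ U2; rewrite !mulmxA -(mulmxA _ (adjoint U)) U2 mulmx1. Qed.

Lemma conj_mulmx_nested A B Q :
  A *m B *m Q *m adjoint (A *m B) = A *m (B *m Q *m adjoint B) *m adjoint A.
Proof. by rewrite adjointM !mulmxA. Qed.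

End SquareMatrices.

Section OneQubit.
Variable C : numClosedFieldType.
Implicit Types w v s t : C.

Definition phase w := w = 1 \/ w = -1 \/ w = 'i \/ w = - 'i.
Definition sign s := s = 1 \/ s = -1.

Lemma mulCii : 'i * 'i = -1 :> C.
Proof. by rewrite -expr2 sqrCi. Qed.

Lemma conjCNi : (- 'i)^* = 'i :> C.
Proof. by rewrite -conjCi conjCK. Qed.

Ltac phase_cases := case=> [->|[->|[->|->]]].
Ltac phase_simpl :=
  rewrite ?(mul1r, mulr1, mulN1r, mulrN1, mulNr, mulrN, opprK, mulCii,
            conjC1, conjCN1, conjCi, conjCNi).

Lemma phase1 : phase 1.
Proof. by left. Qed.

Lemma sign_phase s : sign s -> phase s.
Proof. by rewrite /phase; case=> ->; tauto. Qed.

Lemma signM s t : sign s -> sign t -> sign (s * t).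
Proof. by case=> -> [] ->; rewrite /sign ?mul1r ?mulN1r ?opprK; tauto. Qed.

Lemma sign_sqr s : sign s -> s * s = 1.
Proof. by case=> ->; rewrite ?mulrNN mulr1. Qed.

Lemma phaseM w v : phase w -> phase v -> phase (w * v).
Proof. by rewrite /phase; phase_cases; phase_cases; phase_simpl; tauto. Qed.

Lemma phase_conjM w : phase w -> w^* * w = 1.
Proof. by phase_cases; phase_simpl. Qed.

Lemma phase_sqr w : phase w -> sign (w * w).
Proof. by rewrite /sign; phase_cases; phase_simpl; tauto. Qed.

Ltac mx2_entries := apply/matrixP; case=> [[|[|//]] ?]; case=> [[|[|//]] ?];
  rewrite !mxE ?big_ord_recl ?big_ord0 /= ?mxE /=.
Ltac mx2_simpl := rewrite ?(mul0r, mulr0, add0r, addr0, oppr0, conjC0); phase_simpl.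

Definition ordI : 'I_4 := @Ordinal 4 0 isT.
Definition ordX : 'I_4 := @Ordinal 4 1 isT.
Definition ordY : 'I_4 := @Ordinal 4 2 isT.
Definition ordZ : 'I_4 := @Ordinal 4 3 isT.

Ltac pauli_cases a := case: a => [[|[|[|[|//]]]] ?].

Lemma pauli1_adjoint a : adjoint (pauli1 C a) = pauli1 C a.
Proof. by pauli_cases a; rewrite /adjoint; mx2_entries; mx2_simpl. Qed.

Lemma pauli1_sqr a : pauli1 C a *m pauli1 C a = 1%:M.
Proof. by pauli_cases a; mx2_entries; mx2_simpl. Qed.

Lemma pauli1Y : pauli1 C ordY = - 'i *: (pauli1 C ordZ *m pauli1 C ordX).
Proof. by mx2_entries; mx2_simpl. Qed.

Tactic Notation "witness" uconstr(c) constr(d) := exists (c : C), d.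

Lemma pauli1_mul a b : exists c d, phase c /\ pauli1 C a *m pauli1 C b = c *: pauli1 C d.
Proof.
pauli_cases a; pauli_cases b;
  [ witness 1 ordI | witness 1 ordX | witness 1 ordY | witness 1 ordZ
  | witness 1 ordX | witness 1 ordI | witness 'i ordZ | witness (- 'i) ordY
  | witness 1 ordY | witness (- 'i) ordZ | witness 1 ordI | witness 'i ordX
  | witness 1 ordZ | witness 'i ordY | witness (- 'i) ordX | witness 1 ordI ];
  (split; [rewrite /phase; tauto | by mx2_entries; mx2_simpl]).
Qed.

End OneQubit.

Section QubitBlocks.
Variables (C : numClosedFieldType) (n : nat).
Implicit Types (a b : 'M[C]_2) (A B D E Q U V : 'M[C]_(2 ^ n)).

Definition qblock A B D E : 'M[C]_(2 ^ n.+1) :=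
  castmx (two_pow_succ n, two_pow_succ n) (block_mx A B D E).

Lemma qblock_mul A B D E A' B' D' E' :
  qblock A B D E *m qblock A' B' D' E' =
  qblock (A *m A' + B *m D') (A *m B' + B *m E') (D *m A' + E *m D') (D *m B' + E *m E').
Proof. by rewrite /qblock castmxM mulmx_block. Qed.

Lemma qblock_add A B D E A' B' D' E' :
  qblock A B D E + qblock A' B' D' E' = qblock (A + A') (B + B') (D + D') (E + E').
Proof. by rewrite /qblock castmxD add_block_mx. Qed.

Lemma qblock1 : (1%:M : 'M[C]_(2 ^ n.+1)) = qblock 1%:M 0 0 1%:M.
Proof. by rewrite /qblock -scalar_mx_block castmx1. Qed.

Lemma qblock_adjoint A B D E :
  adjoint (qblock A B D E) = qblock (adjoint A) (adjoint D) (adjoint B) (adjoint E).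
Proof. by rewrite /qblock castmx_adjoint /adjoint map_block_mx tr_block_mx. Qed.

Lemma qblock_inj A B D E A' B' D' E' :
  qblock A B D E = qblock A' B' D' E' -> [/\ A = A', B = B', D = D' & E = E'].
Proof. by move/castmx_inj/eq_block_mx. Qed.

Lemma kron2_qblock a B :
  kron2 a B = qblock (a 0 0 *: B) (a 0 1 *: B) (a 1 0 *: B) (a 1 1 *: B).
Proof. by []. Qed.

Lemma kron2M a b A B : kron2 a A *m kron2 b B = kron2 (a *m b) (A *m B).
Proof.
have sum2 (F : 'I_2 -> C) : \sum_i F i = F 0 + F 1.
  by rewrite big_ord_recl big_ord1; congr (F _ + F _); apply: val_inj.
rewrite !kron2_qblock qblock_mul !mxE !sum2.
by rewrite -!scalemxAl -!scalemxAr !scalerA !scalerDl.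
Qed.

Lemma kron2_adjoint a A : adjoint (kron2 a A) = kron2 (adjoint a) (adjoint A).
Proof. by rewrite !kron2_qblock qblock_adjoint !adjointZ /adjoint !mxE. Qed.

Lemma kron2Zl c a A : kron2 (c *: a) A = c *: kron2 a A.
Proof. by rewrite /kron2 castmxZ scale_block_mx !mxE !scalerA. Qed.

Lemma kron2Zr c a A : kron2 a (c *: A) = c *: kron2 a A.
Proof. by rewrite /kron2 castmxZ scale_block_mx !scalerA ![c * _]mulrC. Qed.

Lemma kron2_1 : kron2 1%:M (1%:M : 'M[C]_(2 ^ n)) = 1%:M.
Proof. by rewrite kron2_qblock qblock1 !mxE /= !scale1r !scale0r. Qed.

Ltac mx_simpl := rewrite ?(mul0mx, mulmx0, mul1mx, mulmx1, add0r, addr0,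
  scale0r, scale1r, scaleN1r, adjoint1, adjoint0).

Lemma ctrl_qblock U : ctrl U = qblock 1%:M 0 0 U.
Proof. by rewrite /ctrl !kron2_qblock qblock_add !mxE /=; mx_simpl. Qed.

Lemma ctrl_adjoint V : adjoint (ctrl V) = ctrl (adjoint V).
Proof. by rewrite !ctrl_qblock qblock_adjoint; mx_simpl. Qed.

Lemma ctrlM A B : ctrl A *m ctrl B = ctrl (A *m B).
Proof. by rewrite !ctrl_qblock qblock_mul; mx_simpl. Qed.

Lemma ctrl1 : ctrl (1%:M : 'M[C]_(2 ^ n)) = 1%:M.
Proof. by rewrite ctrl_qblock qblock1. Qed.

Lemma ctrl_unitary V : unitary V -> unitary (ctrl V).
Proof. by case=> V1 V2; split; rewrite ctrl_adjoint ctrlM ?V1 ?V2 ctrl1. Qed.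

Lemma ctrlN1 : ctrl (-1 *: 1%:M) = kron2 (pauli1 C ordZ) (1%:M : 'M[C]_(2 ^ n)).
Proof. by rewrite kron2_qblock ctrl_qblock !mxE /=; mx_simpl. Qed.

Lemma ctrl_conj_kron2 V a Q : ctrl V *m kron2 a Q *m adjoint (ctrl V) =
  qblock (a 0 0 *: Q) (a 0 1 *: (Q *m adjoint V)) (a 1 0 *: (V *m Q))
         (a 1 1 *: (V *m Q *m adjoint V)).
Proof.
rewrite ctrl_adjoint !ctrl_qblock kron2_qblock !qblock_mul; mx_simpl.
by rewrite -!scalemxAr -!scalemxAl.
Qed.

Lemma ctrl_conj_target V Q : Q *m Q = 1%:M ->
  ctrl V *m kron2 1%:M Q *m adjoint (ctrl V) = kron2 1%:M Q *m ctrl (Q *m V *m Q *m adjoint V).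
Proof.
move=> QQ; rewrite ctrl_conj_kron2 ctrl_qblock kron2_qblock qblock_mul !mxE /=; mx_simpl.
by rewrite !mulmxA QQ mul1mx.
Qed.

Lemma ctrl_conj_controlX V :
  ctrl V *m kron2 (pauli1 C ordX) 1%:M *m adjoint (ctrl V) = qblock 0 (adjoint V) V 0.
Proof. by rewrite ctrl_conj_kron2 !mxE /=; mx_simpl. Qed.

Lemma ctrl_conj_controlX_ctrl V : V *m adjoint V = 1%:M ->
  ctrl V *m kron2 (pauli1 C ordX) 1%:M *m adjoint (ctrl V) =
  ctrl (V *m V) *m kron2 (pauli1 C ordX) (adjoint V).
Proof.
move=> V1; rewrite ctrl_conj_controlX ctrl_qblock kron2_qblock qblock_mul !mxE /=; mx_simpl.
by rewrite -mulmxA V1 mulmx1.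
Qed.

Lemma ctrl_conj_controlZ V : unitary V ->
  ctrl V *m kron2 (pauli1 C ordZ) 1%:M *m adjoint (ctrl V) = kron2 (pauli1 C ordZ) 1%:M.
Proof. by case=> V1 _; rewrite ctrl_conj_kron2 kron2_qblock !mxE /=; mx_simpl; rewrite V1. Qed.

End QubitBlocks.

Section PauliGroup.
Variable C : numClosedFieldType.

Definition is_pauli_string n (S : 'M[C]_(2 ^ n)) := exists f, S = pauli_string C n f.

Lemma pauli_string0 (S : 'M[C]_(2 ^ 0)) : is_pauli_string S -> S = 1%:M.
Proof. by case=> f ->; rewrite /= castmx1. Qed.

Lemma pauli_stringS n (S : 'M[C]_(2 ^ n.+1)) :
  is_pauli_string S <-> exists a T, is_pauli_string T /\ S = kron2 (pauli1 C a) T.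
Proof.
split=> [[f ->]|[a [T [[g ->] ->]]]].
  by exists (f 0%N), (pauli_string C n (fun k => f k.+1)); split; first exists (fun k => f k.+1).
by exists (fun k => if k is k'.+1 then g k' else a).
Qed.

Lemma pauli_string_kron n a (S : 'M[C]_(2 ^ n)) :
  is_pauli_string S -> is_pauli_string (kron2 (pauli1 C a) S).
Proof. by move=> hS; apply/pauli_stringS; exists a, S. Qed.

Lemma pauli_string1 n : is_pauli_string (1%:M : 'M[C]_(2 ^ n)).
Proof.
elim: n => [|n IH]; first by exists (fun _ => ordI); rewrite /= castmx1.
by rewrite -kron2_1; apply: (pauli_string_kron ordI).
Qed.

Lemma pauli_string_adjoint n (S : 'M[C]_(2 ^ n)) : is_pauli_string S -> adjoint S = S.
Proof.
elim: n S => [|n IH] S; first by move/pauli_string0 ->; rewrite adjoint1.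
by case/pauli_stringS => a [T [hT ->]]; rewrite kron2_adjoint pauli1_adjoint IH.
Qed.

Lemma pauli_string_sqr n (S : 'M[C]_(2 ^ n)) : is_pauli_string S -> S *m S = 1%:M.
Proof.
elim: n S => [|n IH] S; first by move/pauli_string0 ->; rewrite mulmx1.
by case/pauli_stringS => a [T [hT ->]]; rewrite kron2M pauli1_sqr IH // kron2_1.
Qed.

Lemma pauli_string_mul n (S T : 'M[C]_(2 ^ n)) : is_pauli_string S -> is_pauli_string T ->
  exists c R, [/\ phase c, is_pauli_string R & S *m T = c *: R].
Proof.
elim: n S T => [|n IH] S T.
  move=> /pauli_string0 -> /pauli_string0 ->; exists 1, 1%:M.
  by split; [exact: phase1 | exact: pauli_string1 | rewrite mulmx1 scale1r].
case/pauli_stringS => a [S' [hS' ->]]; case/pauli_stringS => b [T' [hT' ->]].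
have [c [d [hc e1]]] := pauli1_mul C a b.
have [c' [R [hc' hR e2]]] := IH _ _ hS' hT'.
exists (c * c'), (kron2 (pauli1 C d) R); split.
- exact: phaseM.
- exact: pauli_string_kron.
- by rewrite kron2M e1 e2 kron2Zl kron2Zr scalerA.
Qed.

Lemma is_pauliE n (P : 'M[C]_(2 ^ n)) :
  is_pauli P <-> exists w S, [/\ phase w, is_pauli_string S & P = w *: S].
Proof.
split=> [[w [f [hw ->]]]|[w [S [hw [f ->] ->]]]]; last by exists w, f.
by exists w, (pauli_string C n f); split => //; exists f.
Qed.

Lemma pauli_string_pauli n (S : 'M[C]_(2 ^ n)) : is_pauli_string S -> is_pauli S.
Proof. by move=> hS; apply/is_pauliE; exists 1, S; rewrite scale1r; split => //; exact: phase1. Qed.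

Lemma pauli1mx n : is_pauli (1%:M : 'M[C]_(2 ^ n)).
Proof. exact/pauli_string_pauli/pauli_string1. Qed.

Lemma pauliZ n c (P : 'M[C]_(2 ^ n)) : phase c -> is_pauli P -> is_pauli (c *: P).
Proof.
move=> hc /is_pauliE [w [S [hw hS ->]]]; apply/is_pauliE; exists (c * w), S.
by rewrite scalerA; split => //; exact: phaseM.
Qed.

Lemma pauliM n (P Q : 'M[C]_(2 ^ n)) : is_pauli P -> is_pauli Q -> is_pauli (P *m Q).
Proof.
move=> /is_pauliE [w [S [hw hS ->]]] /is_pauliE [v [T [hv hT ->]]].
have [c [R [hc hR e]]] := pauli_string_mul hS hT.
rewrite -scalemxAl -scalemxAr e !scalerA.
apply/is_pauliE; exists (w * v * c), R; split => //; apply: phaseM => //; exact: phaseM.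
Qed.

Lemma pauli_kron n a (P : 'M[C]_(2 ^ n)) : is_pauli P -> is_pauli (kron2 (pauli1 C a) P).
Proof.
move=> /is_pauliE [w [S [hw hS ->]]]; rewrite kron2Zr.
exact/pauliZ/pauli_string_pauli/pauli_string_kron.
Qed.

Lemma pauli_first_qubit n (P : 'M[C]_(2 ^ n.+1)) : is_pauli P ->
  exists w a S, [/\ phase w, is_pauli_string S & P = w *: kron2 (pauli1 C a) S].
Proof. by move=> /is_pauliE [w [S' [hw /pauli_stringS [a [S [hS ->]]] ->]]]; exists w, a, S. Qed.

Lemma pauli_sqr n (P : 'M[C]_(2 ^ n)) : is_pauli P -> exists2 s, sign s & P *m P = s *: 1%:M.
Proof.
move=> /is_pauliE [w [S [hw hS ->]]]; exists (w * w); first exact: phase_sqr.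
by rewrite -scalemxAl -scalemxAr pauli_string_sqr // scalerA.
Qed.

Lemma pauli_unitary n (P : 'M[C]_(2 ^ n)) : is_pauli P -> unitary P.
Proof.
move=> /is_pauliE [w [S [hw hS ->]]].
rewrite /unitary adjointZ pauli_string_adjoint // -!scalemxAl -!scalemxAr.
by rewrite pauli_string_sqr // !scalerA mulrC phase_conjM // scale1r.
Qed.

Lemma adjoint_unitary_sqr k (U : 'M[C]_k) s :
  unitary U -> sign s -> U *m U = s *: 1%:M -> adjoint U = s *: U.
Proof.
case=> _ U2 hs UU; rewrite -[s *: U]mul1mx -U2 -mulmxA -scalemxAr UU.
by rewrite scalerA sign_sqr // scale1r mulmx1.
Qed.

Lemma pauli_adjoint_sign n (P : 'M[C]_(2 ^ n)) :
  is_pauli P -> exists2 s, sign s & adjoint P = s *: P.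
Proof.
move=> hP; have [s hs PP] := pauli_sqr hP.
by exists s => //; apply: adjoint_unitary_sqr => //; exact: pauli_unitary.
Qed.

Lemma pauli_adjoint n (P : 'M[C]_(2 ^ n)) : is_pauli P -> is_pauli (adjoint P).
Proof. by move=> hP; have [s hs ->] := pauli_adjoint_sign hP; exact/pauliZ/hP/sign_phase. Qed.

Lemma pauli_adjointE n (P : 'M[C]_(2 ^ n)) : is_pauli (adjoint P) <-> is_pauli P.
Proof. by split=> [/pauli_adjoint|/pauli_adjoint //]; rewrite adjointK. Qed.

Lemma pauli_commutator n (P Q : 'M[C]_(2 ^ n)) : is_pauli P -> is_pauli Q ->
  exists2 s, sign s & P *m Q *m adjoint P *m adjoint Q = s *: 1%:M.
Proof.
move=> hP hQ; have [p hp ->] := pauli_adjoint_sign hP.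
have [q hq ->] := pauli_adjoint_sign hQ; have [r hr PQPQ] := pauli_sqr (pauliM hP hQ).
exists (r * (p * q)); first by apply: signM => //; exact: signM.
by rewrite -!scalemxAr -scalemxAl -mulmxA PQPQ !scalerA mulrC [q * p]mulrC.
Qed.

End PauliGroup.

Section Hierarchy.
Variables (C : numClosedFieldType) (n : nat).
Implicit Types P Q U V : 'M[C]_(2 ^ n).

Lemma hier_unitary k U : hier k U -> unitary U.
Proof. by case: k => [|k] /=; [exact: pauli_unitary | case]. Qed.

Lemma pauli_conj P Q : is_pauli P -> is_pauli Q -> is_pauli (P *m Q *m adjoint P).
Proof. by move=> hP hQ; apply: pauliM; [exact: pauliM | exact: pauli_adjoint]. Qed.

Lemma hier_succ k U : hier k U -> hier k.+1 U.
Proof.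
elim: k U => [|k IH] U /=; last by case=> hU hUP; split=> // P /hUP /IH.
by move=> hU; split=> [|P hP]; [exact: pauli_unitary | exact: pauli_conj].
Qed.

Lemma hier_le k l U : (k <= l)%N -> hier k U -> hier l U.
Proof.
move/subnKC <-; elim: (l - k)%N => [|d IH] hU; first by rewrite addn0.
by rewrite addnS; exact/hier_succ/IH.
Qed.

Lemma pauli_clifford P : is_pauli P -> hier 1 P.
Proof. exact: (@hier_succ 0). Qed.

Lemma clifford_conj U P : hier 1 U -> is_pauli P -> is_pauli (U *m P *m adjoint U).
Proof. by case=> _; apply. Qed.

Lemma hier_conj_pauli k P U : is_pauli P -> hier k U -> hier k (P *m U *m adjoint P).
Proof.
elim: k U => [|k IH] U hP /=; first exact: pauli_conj.
have hPu := pauli_unitary hP.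
case=> hU hUQ; split; first by apply: unitaryM; [exact: unitaryM | exact: unitary_adjoint].
move=> Q hQ; have -> : P *m U *m adjoint P *m Q *m adjoint (P *m U *m adjoint P) =
    P *m (U *m (adjoint P *m Q *m P) *m adjoint U) *m adjoint P.
  by rewrite !adjointM adjointK !mulmxA.
apply/IH/hUQ => //; rewrite -[X in _ *m X]adjointK; exact: pauli_conj (pauli_adjoint hP) hQ.
Qed.

Lemma hier_pauliMl k P U : is_pauli P -> hier k U -> hier k (P *m U).
Proof.
case: k => [|k] hP /=; first exact: pauliM.
case=> hU hUQ; split=> [|Q hQ]; first by apply: unitaryM => //; exact: pauli_unitary.
by rewrite conj_mulmx_nested; exact/hier_conj_pauli/hUQ.
Qed.

Lemma hier_cliffordMr k U V : hier k.+1 U -> hier 1 V -> hier k.+1 (U *m V).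
Proof.
case=> hU hUQ [hV hVQ]; split=> [|Q hQ]; first exact: unitaryM.
by rewrite conj_mulmx_nested; exact/hUQ/hVQ.
Qed.

Lemma clifford_mxpow U j : hier 1 U -> hier 1 (mxpow U j).
Proof.
move=> hU; elim: j => [|j IH]; first exact/pauli_clifford/pauli1mx.
by rewrite mxpowSr; exact: hier_cliffordMr.
Qed.

Lemma clifford_adjoint U j : (0 < j)%N -> hier 1 U -> is_pauli (mxpow U j) -> hier 1 (adjoint U).
Proof.
case: j => [//|j] _ hU hUj; have [_ Uj2] := hier_unitary (clifford_mxpow j hU).
have -> : adjoint U = adjoint (mxpow U j.+1) *m mxpow U j.
  by rewrite mxpowSr adjointM -mulmxA Uj2 mulmx1.
exact/hier_pauliMl/clifford_mxpow/hU/pauli_adjoint.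
Qed.

End Hierarchy.

Section ControlledClifford.
Variable C : numClosedFieldType.
Local Notation X := (pauli1 C ordX).

Lemma ctrl_sign_pauli n s : sign s -> is_pauli (ctrl (s *: 1%:M : 'M[C]_(2 ^ n))).
Proof.
case=> ->; first by rewrite scale1r ctrl1; exact: pauli1mx.
by rewrite ctrlN1; exact/pauli_kron/pauli1mx.
Qed.

Lemma ctrl_conj_control_pauli n (V : 'M[C]_(2 ^ n)) a : unitary V ->
  exists2 P, is_pauli P &
    let CPC := ctrl V *m kron2 (pauli1 C a) 1%:M *m adjoint (ctrl V) in
    CPC = P \/ CPC = P *m ctrl (V *m V) *m kron2 X (adjoint V).
Proof.
move=> hV; have [V1 _] := hV; have hCV := ctrl_unitary hV; have [CV1 _] := hCV.
have hZ : is_pauli (kron2 (pauli1 C ordZ) (1%:M : 'M[C]_(2 ^ n))) by exact/pauli_kron/pauli1mx.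
case: a => [[|[|[|[|//]]]] lt_a4].
- exists 1%:M; first exact: pauli1mx.
  by left; rewrite /= kron2_1 mulmx1 CV1.
- by exists 1%:M; [exact: pauli1mx | right; rewrite mul1mx (ctrl_conj_controlX_ctrl V1)].
- exists (- 'i *: kron2 (pauli1 C ordZ) 1%:M).
    by apply: pauliZ hZ; rewrite /phase; tauto.
  right; have -> : pauli1 C (Ordinal lt_a4) = pauli1 C ordY by [].
  have ZX : kron2 (pauli1 C ordZ *m X) (1%:M : 'M[C]_(2 ^ n)) =
      kron2 (pauli1 C ordZ) 1%:M *m kron2 X 1%:M by rewrite kron2M mulmx1.
  rewrite pauli1Y kron2Zl ZX -!scalemxAr -!scalemxAl (conj_mulmx _ _ hCV).
  by rewrite (ctrl_conj_controlZ hV) (ctrl_conj_controlX_ctrl V1) !mulmxA.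
- by exists (kron2 (pauli1 C ordZ) 1%:M); last (left; exact: ctrl_conj_controlZ).
Qed.

Lemma ctrl_conj_pauli n (V : 'M[C]_(2 ^ n)) P : unitary V -> is_pauli P ->
  exists P1 S, [/\ is_pauli P1, is_pauli_string S &
    let W := S *m V *m S *m adjoint V in
    let CPC := ctrl V *m P *m adjoint (ctrl V) in
    CPC = P1 *m ctrl W \/
    CPC = P1 *m (ctrl (V *m V) *m (kron2 X (adjoint V) *m kron2 1%:M S *m ctrl W))].
Proof.
move=> hV /pauli_first_qubit [w [a [S [hw hS ->]]]].
have [P' hP' hCPC] := ctrl_conj_control_pauli a hV.
have hS1 : is_pauli (kron2 1%:M S) by exact/(pauli_kron ordI)/pauli_string_pauli.
have -> : w *: kron2 (pauli1 C a) S = w *: (kron2 (pauli1 C a) 1%:M *m kron2 1%:M S).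
  by rewrite kron2M mulmx1 mul1mx.
rewrite -scalemxAr -scalemxAl (conj_mulmx _ _ (ctrl_unitary hV)).
rewrite (ctrl_conj_target _ (pauli_string_sqr hS)).
case: hCPC => /= ->.
  exists (w *: (P' *m kron2 1%:M S)), S; split=> //; first exact/pauliZ/pauliM.
  by left; rewrite -scalemxAl -!mulmxA.
exists (w *: P'), S; split=> //; first exact: pauliZ.
by right; rewrite -!scalemxAl !mulmxA.
Qed.

Lemma kron2_id_clifford n (B : 'M[C]_(2 ^ n)) : hier 1 B -> hier 1 (kron2 1%:M B).
Proof.
move=> hB; have [B1 B2] := hier_unitary hB; split.
  by split; rewrite kron2_adjoint kron2M adjoint1 mulmx1 ?B1 ?B2 kron2_1.
move=> P /pauli_first_qubit [w [b [S [hw hS ->]]]] /=.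
rewrite -scalemxAr -scalemxAl kron2_adjoint !kron2M adjoint1 mul1mx mulmx1.
by apply/pauliZ/pauli_kron/clifford_conj/pauli_string_pauli.
Qed.

Lemma kron2_X_clifford n (B : 'M[C]_(2 ^ n)) : hier 1 B -> hier 1 (kron2 X B).
Proof.
move=> hB; have -> : kron2 X B = kron2 X 1%:M *m kron2 1%:M B by rewrite kron2M mulmx1 mul1mx.
exact/hier_pauliMl/kron2_id_clifford/hB/pauli_kron/pauli1mx.
Qed.

Lemma clifford_ctrl_of_pauli n (V : 'M[C]_(2 ^ n)) : is_pauli V -> hier 1 (ctrl V).
Proof.
move=> hV; split=> [|P hP]; first exact/ctrl_unitary/pauli_unitary.
have [P1 [S [hP1 hS hCPC]]] := ctrl_conj_pauli (pauli_unitary hV) hP.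
have hCW : is_pauli (ctrl (S *m V *m S *m adjoint V)).
  have [s hs] := pauli_commutator (pauli_string_pauli hS) hV.
  by rewrite pauli_string_adjoint // => ->; exact: ctrl_sign_pauli.
have [t ht VV] := pauli_sqr hV.
case: hCPC => /= ->; first exact: pauliM.
apply: pauliM => //; apply: pauliM; first by rewrite VV; exact: ctrl_sign_pauli.
apply: pauliM => //; apply: pauliM; first exact/pauli_kron/pauli_adjoint.
exact/(pauli_kron ordI)/pauli_string_pauli.
Qed.

Lemma hier_ctrl_of_pauli_mxpow k n (V : 'M[C]_(2 ^ n)) :
  hier 1 V -> is_pauli (mxpow V (2 ^ k)) -> hier k.+1 (ctrl V).
Proof.
elim: k n V => [|k IH] n V hV hVk; first by apply: clifford_ctrl_of_pauli; rewrite -[V]mxpow1.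
split=> [|P hP]; first exact: ctrl_unitary (hier_unitary hV).
have [P1 [S [hP1 hS hCPC]]] := ctrl_conj_pauli (hier_unitary hV) hP.
have hCW : hier 1 (ctrl (S *m V *m S *m adjoint V)).
  apply: clifford_ctrl_of_pauli; rewrite -!mulmxA; apply: pauliM; first exact: pauli_string_pauli.
  by rewrite !mulmxA; apply/clifford_conj/pauli_string_pauli.
case: hCPC => ->; first by apply: hier_pauliMl => //; exact: hier_le hCW.
apply: hier_pauliMl => //; apply: hier_cliffordMr.
  by apply: IH; [exact: hier_cliffordMr | rewrite mxpow_sqr].
apply: (@hier_cliffordMr _ _ 0) => //; apply: hier_cliffordMr.
  by apply/kron2_X_clifford/(clifford_adjoint _ hV hVk); rewrite expn_gt0.
exact/pauli_clifford/(pauli_kron ordI)/pauli_string_pauli.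
Qed.

Lemma pauli_of_clifford_ctrl n (V : 'M[C]_(2 ^ n)) : unitary V -> hier 1 (ctrl V) -> is_pauli V.
Proof.
move=> hV [_ hCP]; have /= := hCP _ (pauli_kron ordX (pauli1mx C n)).
rewrite ctrl_conj_controlX => /pauli_first_qubit [w [b [S [hw hS]]]].
rewrite -kron2Zr kron2_qblock => /qblock_inj [_ _ eV _].
have hwS : is_pauli (w *: S) := pauliZ hw (pauli_string_pauli hS).
have V_neq0 : V != 0 by apply: unitary_neq0 hV _; rewrite expn_gt0.
move: eV; case: b => [[|[|[|[|//]]]] ?]; rewrite !mxE /= => eV; rewrite eV in V_neq0 *.
- by rewrite scale0r eqxx in V_neq0.
- by rewrite scale1r.
- by apply: pauliZ hwS; rewrite /phase; tauto.
- by rewrite scale0r eqxx in V_neq0.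
Qed.

Lemma pauli_mxpow_of_hier_ctrl k n (V : 'M[C]_(2 ^ n)) :
  hier 1 V -> hier k.+1 (ctrl V) -> is_pauli (mxpow V (2 ^ k)).
Proof.
elim: k n V => [|k IH] n V hV hCV.
  by rewrite mxpow1; exact: pauli_of_clifford_ctrl (hier_unitary hV) hCV.
rewrite -mxpow_sqr; apply: IH; first exact: hier_cliffordMr.
have [V1 V2] := hier_unitary hV.
have -> : ctrl (V *m V) = (ctrl V *m kron2 X 1%:M *m adjoint (ctrl V)) *m kron2 X V.
  by rewrite ctrl_conj_controlX_ctrl // -mulmxA kron2M pauli1_sqr V2 kron2_1 mulmx1.
apply: hier_cliffordMr; last exact: kron2_X_clifford.
by case: hCV => _; apply; exact/pauli_kron/pauli1mx.
Qed.

Lemma pauli_periodicity_adjoint n (U : 'M[C]_(2 ^ n)) m :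
  pauli_periodicity U m -> pauli_periodicity (adjoint U) m.
Proof.
case=> hU hlt; split=> [|t /hlt hUt]; rewrite -mxpow_adjoint; first exact: pauli_adjoint.
by move/pauli_adjointE.
Qed.

End ControlledClifford.

Theorem mainTheorem3 (C : numClosedFieldType) (n : nat) (U : 'M[C]_(2 ^ n)) (m : nat) :
  (1 <= n)%N -> (1 <= m)%N ->
  clifford_level 2 U -> pauli_periodicity U m ->
  [/\ invmx (ctrl U) = ctrl (invmx U),
      clifford_level 2 (invmx U),
      pauli_periodicity (invmx U) m,
      clifford_level (m + 2) (invmx (ctrl U))
    & ~ clifford_level (m + 1) (invmx (ctrl U))].
Proof.
move=> _ m_gt0 hU hper; have hUu := hier_unitary hU.
have hUa : hier 1 (adjoint U) by apply: (clifford_adjoint _ hU hper.1); rewrite expn_gt0.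
have hpera := pauli_periodicity_adjoint hper.
rewrite (invmx_unitary (ctrl_unitary hUu)) ctrl_adjoint (invmx_unitary hUu).
split=> //; first by rewrite addn2; exact: hier_ctrl_of_pauli_mxpow hpera.1.
case: m m_gt0 hper hpera => [//|k] _ _ [_ hlt]; rewrite addn1.
by move/(pauli_mxpow_of_hier_ctrl hUa); exact: hlt.
Qed.
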